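(* Let $U=\sum_{j=0}^3c_j\sigma_j\otimes\sigma_j$ be a normalized two-qubit unitary with parameters $x=\pi/4$ and $y=z$. Write $E(\alpha,\beta):=E(\varphi(\alpha,\beta;\frac{\pi}{2},\frac{\pi}{2}))$. Then $$\max_{\alpha\in[0,\pi/4],\ \beta\in[0,\pi/2]}E(\alpha,\beta)=E(\tfrac{\pi}{4},\tfrac{\pi}{4})=H(|c_0|^2,|c_0|^2,|c_2|^2,|c_2|^2).$$
   Context: Pauli matrices: $\sigma_0=I$, $\sigma_1=\begin{pmatrix}0&1\\1&0\end{pmatrix}$, $\sigma_2=\begin{pmatrix}0&-i\\i&0\end{pmatrix}$, $\sigma_3=\begin{pmatrix}1&0\\0&-1\end{pmatrix}$. For real $x,y,z$ set $c_0=\cos x\cos y\cos z+i\sin x\sin y\sin z$, $c_1=\cos x\sin y\sin z+i\sin x\cos y\cos z$, $c_2=\sin x\cos y\sin z+i\cos x\sin y\cos z$, $c_3=\sin x\sin y\cos z+i\cos x\cos y\sin z$, and $U=\sum_{j=0}^3c_j\sigma_j\otimes\sigma_j$ acting on qubits $A,B$. $U$ is called normalized if $\pi/4\ge x\ge y\ge z\ge0$ and $0<y<\pi/4$. $E(\varphi(\alpha,\beta;\frac{\pi}{2},\frac{\pi}{2}))$ denotes the entanglement entropy $S(\mathrm{Tr}_{AR_A}|\chi\rangle\langle\chi|)$ (von Neumann entropy, base-2 logarithm) of $|\chi\rangle=U\big((\cos\alpha|00\rangle+\sin\alpha|11\rangle)_{AR_A}\otimes(\cos\beta|00\rangle+\sin\beta|11\rangle)_{BR_B}\big)$,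 with $R_A,R_B$ qubits. $H$ is the base-2 Shannon entropy. *)

From HB Require Import structures.
From mathcomp Require Import all_boot all_order all_algebra.
From mathcomp Require Import all_classical all_reals all_analysis.
From mathcomp Require Import complex.
From Stdlib Require Import ClassicalEpsilon.

Set Implicit Arguments.
Unset Strict Implicit.
Unset Printing Implicit Defensive.

Import Order.TTheory GRing.Theory Num.Theory.
Local Open Scope ring_scope.

Section QDefs.
Variable R : realType.
Local Notation C := R[i].

Definition pauli (j : 'I_4) : 'M[C]_2 :=
  \matrix_(r < 2, s < 2)
   match nat_of_ord j with
   | 0 => if r == s then 1 else 0
   | 1 => if r != s then 1 else 0
   | 2 => if r == s then 0 else if r == 0 :> nat then Complex 0 (-1) else Complex 0 1
   | _ => if r == s then (if r == 0 :> nat then 1 else -1) else 0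
   end.

Definition coef_c (x y z : R) (j : 'I_4) : C :=
  match nat_of_ord j with
  | 0 => Complex (cos x * cos y * cos z) (sin x * sin y * sin z)
  | 1 => Complex (cos x * sin y * sin z) (sin x * cos y * cos z)
  | 2 => Complex (sin x * cos y * sin z) (cos x * sin y * cos z)
  | _ => Complex (sin x * sin y * cos z) (cos x * cos y * sin z)
  end.

(* matrix element <a' b'| U |a b> of U = sum_j c_j sigma_j (x) sigma_j,
   first tensor factor on qubit A, second on qubit B *)
Definition Uel (x y z : R) (a' b' a b : 'I_2) : C :=
  \sum_(j < 4) coef_c x y z j * pauli j a' a * pauli j b' b.

(* coefficients of cos t |00> + sin t |11> *)
Definition phi2 (t : R) (i k : 'I_2) : C :=
  if i == k then (if i == 0 :> nat then Complex (cos t) 0 else Complex (sin t) 0) else 0.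

(* amplitude <a, rA, b, rB | chi> of
   chi = U ((cos al|00>+sin al|11>)_{A RA} (x) (cos be|00>+sin be|11>)_{B RB}) *)
Definition chi (x y z al be : R) (a rA b rB : 'I_2) : C :=
  \sum_(a0 < 2) \sum_(b0 < 2) Uel x y z a b a0 b0 * phi2 al a0 rA * phi2 be b0 rB.

(* index i : 'I_4 of the A RA system encodes (a, rA) = (i / 2, i mod 2) *)
Definition hi (i : 'I_4) : 'I_2 := inord (i %/ 2).
Definition lo (i : 'I_4) : 'I_2 := inord (i %% 2).

(* reduced density matrix Tr_{B RB} |chi><chi| on A RA *)
Definition rhoA (x y z al be : R) : 'M[C]_4 :=
  \matrix_(i < 4, k < 4)
    \sum_(b < 2) \sum_(rB < 2)
      chi x y z al be (hi i) (lo i) b rB * conjc (chi x y z al be (hi k) (lo k) b rB).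

Definition eta (t : R) : R := if 0 < t then - (t * ln t / ln 2) else 0.

Definition spectrum n (M : 'M[C]_n) : seq C :=
  epsilon (inhabits [::])
    (fun rs : seq C => char_poly M = \prod_(l <- rs) ('X - l%:P)).

(* von Neumann entropy, base 2 (eigenvalues of a density matrix are real) *)
Definition vN_entropy n (M : 'M[C]_n) : R :=
  \sum_(l <- spectrum M) eta (complex.Re l).

Definition shannon (p : seq R) : R := \sum_(t <- p) eta t.

Definition Ent (x y z al be : R) : R := vN_entropy (rhoA x y z al be).

Definition normalized (x y z : R) : Prop :=
  pi / 4 >= x /\ x >= y /\ y >= z /\ z >= 0 /\ 0 < y /\ y < pi / 4.

End QDefs.

From Pilot Require Import Defs.
From HB Require Import structures.
From mathcomp Require Import all_boot all_order all_algebra.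
From mathcomp Require Import all_classical all_reals all_analysis.
From mathcomp Require Import complex ring lra.
From Stdlib Require Import ClassicalEpsilon.
Import Order.TTheory GRing.Theory Num.Theory.
Local Open Scope ring_scope.
Local Open Scope complex_scope.

(* U preserves the parity of AB, so the reduced state of A R_A is block
   diagonal with respect to the parity of A R_A, with two 2x2 blocks.  For
   x = pi/4 and y = z, with w = sin y cos y, a = cos 2al and b = cos 2be, the
   blocks have traces 1/2 + w a b and 1/2 - w a b and the same determinant
   d = w^2 (1 - 2 w^2) (1 - a^2) (1 - b^2) / 2, so the spectrum consists of the
   roots (t +- sqrt (t^2 - 4 d)) / 2 of the two quadratics X^2 - t X + d.
   Let P = |c0|^2 = (1 - 2 w^2) / 2 and Q = |c2|^2 = w^2, so that Q <= P.
   By Gibbs' inequality against (P, Q, P, Q) the entropy of the spectrum is at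
   most -(l1 + l3) log P - (l2 + l4) log Q, where l1 and l3 are the larger roots
   of the two quadratics, and this is at most H(P, P, Q, Q) as soon as
   l1 + l3 >= 2 P, i.e. sqrt (t1^2 - 4 d) + sqrt (t2^2 - 4 d) >= 1 - 4 w^2.
   It suffices to check this elementary inequality after replacing
   (1 - a^2) (1 - b^2) by its upper bound (1 - |a b|)^2; squaring twice then
   reduces it to a polynomial inequality.  At al = be = pi/4 we have a = b = 0
   and the spectrum is exactly P, Q, P, Q. *)

Local Notation e k := (@inord 3 k).

Definition block03 (i : 'I_4) : bool := (i == 0 :> nat) || (i == 3 :> nat).

Definition blockdiag03 {T : comRingType} (A : 'M[T]_4) : Prop :=
  forall i j, block03 i != block03 j -> A i j = 0.

Lemma det_blockdiag03 (T : comRingType) (A : 'M[T]_4) : blockdiag03 A ->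
  \det A = (A (e 0) (e 0) * A (e 3) (e 3) - A (e 0) (e 3) * A (e 3) (e 0))
         * (A (e 1) (e 1) * A (e 2) (e 2) - A (e 1) (e 2) * A (e 2) (e 1)).
Proof.
move=> A0.
have [f Af] : {f : nat -> nat -> T | forall i j : 'I_4, A i j = f i j}.
  by exists (fun i j => A (e i) (e j)) => i j; rewrite !inord_val.
have f0 i j : (i < 4)%N -> (j < 4)%N ->
    ((i == 0) || (i == 3)) != ((j == 0) || (j == 3)) -> f i j = 0.
  move=> i4 j4 hij; have := Af (e i) (e j); rewrite !inordK // => <-.
  by apply: A0; rewrite /block03 !inordK.
rewrite !Af !inordK //.
do 3! rewrite ?(expand_det_row _ ord0) /cofactor ?big_ord_recr ?big_ord0 /=.
rewrite !det_mx11 !mxE !Af /bump /=.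
rewrite [f 0 1]f0 // [f 0 2]f0 // [f 3 1]f0 // [f 3 2]f0 //.
rewrite [f 1 0]f0 // [f 2 0]f0 // [f 1 3]f0 // [f 2 3]f0 //.
ring.
Qed.

Lemma char_poly_blockdiag03 (T : comRingType) (A : 'M[T]_4) : blockdiag03 A ->
  char_poly A =
    (('X - (A (e 0) (e 0))%:P) * ('X - (A (e 3) (e 3))%:P)
       - (A (e 0) (e 3))%:P * (A (e 3) (e 0))%:P)
  * (('X - (A (e 1) (e 1))%:P) * ('X - (A (e 2) (e 2))%:P)
       - (A (e 1) (e 2))%:P * (A (e 2) (e 1))%:P).
Proof.
move=> A0; rewrite /char_poly (@det_blockdiag03 {poly T}).
  by rewrite !mxE !eqxx -!val_eqE /= !inordK // !mulr1n !mulr0n !sub0r !mulrNN.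
move=> i j hij; rewrite !mxE A0 // oppr0 addr0.
by have [ij | _] := eqVneq i j; [rewrite ij eqxx in hij | rewrite mulr0n].
Qed.

Lemma XsubC_quadratic (T : comRingType) (a b c d l1 l2 : T) :
  a + b = l1 + l2 -> a * b - c * d = l1 * l2 ->
  ('X - a%:P) * ('X - b%:P) - c%:P * d%:P = ('X - l1%:P) * ('X - l2%:P) :> {poly T}.
Proof.
have expand u v p : ('X - u%:P) * ('X - v%:P) - p%:P
    = 'X ^+ 2 - (u + v)%:P * 'X + (u * v - p)%:P :> {poly T}.
  by rewrite polyCD polyCB polyCM; ring.
move=> sum prod.
by rewrite -polyCM expand -[RHS]subr0 -polyC0 expand sum prod subr0.
Qed.

Definition quad_roots {R : rcfType} (t d : R) : seq R :=
  [:: (t + Num.sqrt (t ^+ 2 - 4 * d)) / 2; (t - Num.sqrt (t ^+ 2 - 4 * d)) / 2].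

Lemma quad_roots_factor (R : rcfType) (a b c e : R[i]) (t d : R) :
  a + b = t%:C -> a * b - c * e = d%:C -> 0 <= t ^+ 2 - 4 * d ->
  ('X - a%:P) * ('X - b%:P) - c%:P * e%:P = \prod_(l <- quad_roots t d) ('X - l%:C%:P).
Proof.
move=> sum prod disc; rewrite !big_cons big_nil mulr1.
apply: XsubC_quadratic; rewrite ?sum ?prod -?rmorphD -?rmorphM; congr _%:C.
  by field.
set s := Num.sqrt _.
rewrite (_ : (t + s) / 2 * ((t - s) / 2) = (t ^+ 2 - s ^+ 2) / 4); last by field.
by rewrite sqr_sqrtr //; field.
Qed.

Lemma perm_spectrum (R : realType) n (M : 'M[R[i]]_n) (s : seq R[i]) :
  char_poly M = \prod_(l <- s) ('X - l%:P) -> perm_eq (spectrum M) s.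
Proof.
move=> hs; apply: prod_XsubC_eq; rewrite /spectrum.
have := epsilon_spec (inhabits [::])
  (fun rs : seq R[i] => char_poly M = \prod_(l <- rs) ('X - l%:P)) (ex_intro _ s hs).
by move=> <-.
Qed.

Lemma vN_entropy_real_roots (R : realType) n (M : 'M[R[i]]_n) (s : seq R) :
  char_poly M = \prod_(l <- s) ('X - l%:C%:P) -> vN_entropy M = shannon s.
Proof.
rewrite -(big_map (real_complex R) xpredT (fun l => 'X - l%:P)) => /perm_spectrum hs.
by rewrite /vN_entropy (perm_big _ hs) big_map.
Qed.

Lemma normc_complex (R : rcfType) (a b : R) :
  Normc.normc (Complex a b) ^+ 2 = a ^+ 2 + b ^+ 2.
Proof. by rewrite /= sqr_sqrtr // addr_ge0 ?sqr_ge0. Qed.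

Lemma mulcJ (R : rcfType) (u : R[i]) : u * conjc u = (Normc.normc u ^+ 2)%:C.
Proof.
case: u => a b; rewrite normc_complex; simpc.
by rewrite /real_complex_def [b * a]mulrC addNr -!expr2.
Qed.

Section Entropy.
Context {R : realType}.

Lemma ln2_gt0 : 0 < ln (2 : R).
Proof. by apply: ln_gt0; lra. Qed.

Lemma eta_gt0E {t : R} : 0 < t -> Defs.eta t = - (t * ln t) / ln 2.
Proof. by move=> t_gt0; rewrite /Defs.eta t_gt0 mulNr. Qed.

Lemma eta_le_cross {l m : R} : 0 <= l -> 0 < m -> Defs.eta l <= (m - l - l * ln m) / ln 2.
Proof.
move=> l_ge0 m_gt0; have l2 := ln2_gt0.
have [l_gt0 | l_le0] := ltrP 0 l; last first.
  have -> : l = 0 by apply/eqP; rewrite eq_le l_le0 l_ge0.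
  by rewrite /Defs.eta ltxx mul0r !subr0 divr_ge0 // ltW.
rewrite eta_gt0E // ler_pM2r ?invr_gt0 //.
have ml_gt0 : 0 < m / l by apply: divr_gt0.
have := @le_ln1Dx R (m / l - 1) ltac:(lra).
rewrite addrC subrK ln_div ?posrE // => /(ler_wpM2l (ltW l_gt0)).
have -> : l * (m / l - 1) = m - l by field; apply/eqP; lra.
rewrite mulrBr; lra.
Qed.

Lemma shannon4_le (l1 l2 l3 l4 P Q : R) :
  0 <= l1 -> 0 <= l2 -> 0 <= l3 -> 0 <= l4 -> l1 + l2 + l3 + l4 = 1 ->
  0 < Q <= P -> 2 * P + 2 * Q = 1 -> 2 * P <= l1 + l3 ->
  shannon [:: l1; l2; l3; l4] <= shannon [:: P; P; Q; Q].
Proof.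
move=> l1_ge0 l2_ge0 l3_ge0 l4_ge0 l_sum /andP[Q_gt0 QP] PQ_sum l13.
have P_gt0 : 0 < P by lra.
rewrite /shannon !big_cons big_nil !addr0 !addrA (eta_gt0E P_gt0) (eta_gt0E Q_gt0).
have := eta_le_cross l1_ge0 P_gt0; have := eta_le_cross l2_ge0 Q_gt0.
have := eta_le_cross l3_ge0 P_gt0; have := eta_le_cross l4_ge0 Q_gt0.
move=> e4 e3 e2 e1; apply: le_trans (lerD (lerD (lerD e1 e2) e3) e4) _.
rewrite -!mulrDl ler_pM2r ?invr_gt0 ?ln2_gt0 //.
have lnQP : ln Q <= ln P by rewrite ler_ln ?posrE.
have key : 0 <= l1 * ln P + l3 * ln P - 2 * (P * ln P) - l1 * ln Q - l3 * ln Q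
                + 2 * (P * ln Q).
  rewrite (_ : _ - _ + _ = (l1 + l3 - 2 * P) * (ln P - ln Q)); last by ring.
  by apply: mulr_ge0; lra.
have eQ1 : l1 * ln Q + l2 * ln Q + l3 * ln Q + l4 * ln Q = ln Q.
  by rewrite -!mulrDl l_sum mul1r.
have eQ2 : 2 * (P * ln Q) + 2 * (Q * ln Q) = ln Q by rewrite !mulrA -mulrDl PQ_sum mul1r.
lra.
Qed.

End Entropy.

Lemma ler_sqrtD (R : rcfType) (A B m : R) : 0 <= A -> 0 <= B -> 0 <= m ->
  (0 <= m ^+ 2 - (A + B) -> (m ^+ 2 - (A + B)) ^+ 2 <= 4 * (A * B)) ->
  m <= Num.sqrt A + Num.sqrt B.
Proof.
move=> A_ge0 B_ge0 m_ge0 hAB.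
have sA := sqrtr_ge0 A; have sB := sqrtr_ge0 B; have sAB := sqrtr_ge0 (A * B).
rewrite -ler_sqr ?nnegrE ?addr_ge0 // sqrrD !sqr_sqrtr // -sqrtrM //.
have [Rh_le0 | Rh_gt0] := lerP (m ^+ 2 - (A + B)) 0; first lra.
suff : m ^+ 2 - (A + B) <= 2 * Num.sqrt (A * B) by lra.
have -> : 2 * Num.sqrt (A * B) = Num.sqrt (4 * (A * B)).
  have sqrt4 : Num.sqrt (4 : R) = 2.
    by rewrite (_ : 4 = 2 ^+ 2) ?sqrtr_sqr ?ger0_norm // expr2 -natrM.
  by rewrite [RHS]sqrtrM ?ler0n // sqrt4.
by rewrite -[leLHS]ger0_norm ?(ltW Rh_gt0) // -sqrtr_sqr ler_wsqrtr // hAB // ltW.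
Qed.

Section Discriminant.
Context {R : realType}.
Implicit Types w u v d a b : R.

Lemma le_half_sqr {w} : 0 < w -> 4 * w ^+ 2 <= 1 -> w <= 1 / 2.
Proof. by move=> w_gt0 w_le; rewrite expr2 in w_le; nra. Qed.

(* [block_det w a b] below, with (1 - a^2) (1 - b^2) replaced by its upper
   bound (1 - u)^2 for u = |a b|. *)
Definition det_bound w u : R := w ^+ 2 * (1 - 2 * w ^+ 2) * (1 - u) ^+ 2 / 2.

Lemma disc_det_bound_ge0 {w u} : 0 < w -> 4 * w ^+ 2 <= 1 -> 0 <= u <= 1 ->
  0 <= (1 / 2 - w * u) ^+ 2 - 4 * det_bound w u.
Proof.
move=> w_gt0 w_le /andP[u_ge0 u_le1]; have := le_half_sqr w_gt0 w_le.
rewrite (_ : _ - _ = (1 - u) * (1 / 2 - 2 * w ^+ 2) ^+ 2 + u * (1 / 2 - w) ^+ 2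
                     + w ^+ 2 * (1 - 4 * w ^+ 2) * u * (1 - u)); last first.
  by rewrite /det_bound; field.
by move=> w_le_half; rewrite !addr_ge0 ?mulr_ge0 ?sqr_ge0 //; lra.
Qed.

Lemma sqrt_disc_det_bound {w u} : 0 < w -> 4 * w ^+ 2 <= 1 -> 0 <= u <= 1 ->
  1 - 4 * w ^+ 2 <= Num.sqrt ((1 / 2 + w * u) ^+ 2 - 4 * det_bound w u)
                    + Num.sqrt ((1 / 2 - w * u) ^+ 2 - 4 * det_bound w u).
Proof.
move=> w_gt0 w_le u01; have A2_ge0 := disc_det_bound_ge0 w_gt0 w_le u01.
case/andP: u01 => u_ge0 u_le1.
set A1 := _ - 4 * det_bound w u; set A2 := (1 / 2 - _) ^+ 2 - _ in A2_ge0 *.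
have wu_ge0 := mulr_ge0 (ltW w_gt0) u_ge0.
have A12 : A2 <= A1.
  rewrite /A1 /A2 lerD2r -subr_ge0.
  by rewrite (_ : (1 / 2 + w * u) ^+ 2 - _ = 2 * (w * u)); [lra | field].
have W_ge0 := sqr_ge0 w.
apply: ler_sqrtD; [lra | lra | lra | move=> Rh_ge0].
set Rh := _ - (A1 + A2) in Rh_ge0 *.
set m := 1 - 4 * w ^+ 2.
set H := (1 - u) * m ^+ 3 + u * w ^+ 2 * (6 + 8 * w ^+ 2 - 32 * w ^+ 4)
         + 4 * w ^+ 2 * m * u * (1 - u).
have H_ge0 : 0 <= H.
  have m_ge0 : 0 <= m by rewrite /m; lra.
  rewrite /H !addr_ge0 ?mulr_ge0 ?exprn_ge0 //; try lra.
  by rewrite (_ : w ^+ 4 = w ^+ 2 * w ^+ 2) -?exprD //; nra.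
have : 4 * (A1 * A2) - Rh ^+ 2 = 8 * u * w ^+ 2 * (2 * Rh + H).
  by rewrite /Rh /H /m /A1 /A2 /det_bound; field.
have : 0 <= 8 * u * w ^+ 2 * (2 * Rh + H) by rewrite !mulr_ge0 //; lra.
lra.
Qed.

Lemma half_addr_mul_ge0 {w v} : 0 < w -> 4 * w ^+ 2 <= 1 -> `|v| <= 1 ->
  0 <= 1 / 2 + w * v /\ 0 <= 1 / 2 - w * v.
Proof.
move=> w_gt0 w_le v_le1; have := le_half_sqr w_gt0 w_le.
have : `|w * v| <= w by rewrite normrM gtr0_norm // -[leRHS]mulr1 ler_pM2l.
by rewrite ler_norml; lra.
Qed.

Lemma disc_ge0 {w v d} : 0 < w -> 4 * w ^+ 2 <= 1 -> `|v| <= 1 -> d <= det_bound w `|v| ->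
  0 <= (1 / 2 + w * v) ^+ 2 - 4 * d /\ 0 <= (1 / 2 - w * v) ^+ 2 - 4 * d.
Proof.
move=> w_gt0 w_le v_le1 d_le.
have v01 : 0 <= `|v| <= 1 by rewrite normr_ge0 v_le1.
have disc0 := disc_det_bound_ge0 w_gt0 w_le v01.
have w_le_half := le_half_sqr w_gt0 w_le.
have wv_le : w * `|v| <= w by rewrite -[leRHS]mulr1 ler_pM2l.
have wv_hi : w * v <= w * `|v| by rewrite ler_pM2l // ler_norm.
have wv_lo : - (w * v) <= w * `|v| by rewrite -mulrN -normrN ler_pM2l // ler_norm.
have sqr_ge t : 1 / 2 - w * `|v| <= t -> (1 / 2 - w * `|v|) ^+ 2 <= t ^+ 2.
  by move=> ht; rewrite ler_sqr ?nnegrE; lra.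
have := sqr_ge (1 / 2 + w * v) ltac:(lra); have := sqr_ge (1 / 2 - w * v) ltac:(lra).
by split; lra.
Qed.

Lemma sqrt_disc_ge {w v d} : 0 < w -> 4 * w ^+ 2 <= 1 -> `|v| <= 1 ->
  d <= det_bound w `|v| ->
  1 - 4 * w ^+ 2 <= Num.sqrt ((1 / 2 + w * v) ^+ 2 - 4 * d)
                    + Num.sqrt ((1 / 2 - w * v) ^+ 2 - 4 * d).
Proof.
move=> w_gt0 w_le; wlog v_ge0 : v / 0 <= v => [hwlog | v_le1 d_le].
  have [/hwlog // | v_lt0 v_le1 d_le] := lerP 0 v.
  have := hwlog (- v); rewrite oppr_ge0 normrN mulrN opprK [Num.sqrt _ + _]addrC.
  by apply=> //; exact: ltW.
have v01 : 0 <= v <= 1 by rewrite v_ge0 -(ger0_norm v_ge0).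
apply: le_trans (sqrt_disc_det_bound w_gt0 w_le v01) _.
rewrite ger0_norm // in d_le.
by apply: lerD; apply: ler_wsqrtr; lra.
Qed.

Lemma sqrt_disc_le {t d : R} : 0 <= t -> 0 <= d -> Num.sqrt (t ^+ 2 - 4 * d) <= t.
Proof. by move=> t_ge0 d_ge0; rewrite -[leRHS]ger0_norm // -sqrtr_sqr ler_wsqrtr //; lra. Qed.

Lemma shannon_block_le {w v d} : 0 < w -> 4 * w ^+ 2 <= 1 -> `|v| <= 1 -> 0 <= d ->
  d <= det_bound w `|v| ->
  shannon (quad_roots (1 / 2 + w * v) d ++ quad_roots (1 / 2 - w * v) d)
  <= shannon [:: (1 - 2 * w ^+ 2) / 2; (1 - 2 * w ^+ 2) / 2; w ^+ 2; w ^+ 2].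
Proof.
move=> w_gt0 w_le v_le1 d_ge0 d_le.
have [disc1 disc2] := disc_ge0 w_gt0 w_le v_le1 d_le.
have sum_ge := sqrt_disc_ge w_gt0 w_le v_le1 d_le.
have := half_addr_mul_ge0 w_gt0 w_le v_le1.
set t1 := 1 / 2 + w * v; set t2 := 1 / 2 - w * v => -[t1_ge0 t2_ge0].
have s1_le := sqrt_disc_le t1_ge0 d_ge0; have s2_le := sqrt_disc_le t2_ge0 d_ge0.
have := sqrtr_ge0 (t1 ^+ 2 - 4 * d); have := sqrtr_ge0 (t2 ^+ 2 - 4 * d).
have W_gt0 : 0 < w ^+ 2 by rewrite exprn_gt0.
move=> s2_ge0 s1_ge0; apply: shannon4_le; rewrite /t1 /t2 in s1_le s2_le sum_ge *; lra.
Qed.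

Definition block_det w a b : R :=
  w ^+ 2 * (1 - 2 * w ^+ 2) * (1 - a ^+ 2) * (1 - b ^+ 2) / 2.

Lemma one_sub_sqr_mul_le a b : (1 - a ^+ 2) * (1 - b ^+ 2) <= (1 - `|a * b|) ^+ 2.
Proof.
rewrite -subr_ge0 (_ : _ - _ = (`|a| - `|b|) ^+ 2) ?sqr_ge0 //.
by rewrite normrM -(real_normK (num_real a)) -(real_normK (num_real b)); ring.
Qed.

Lemma block_det_ge0 {w a b} : 4 * w ^+ 2 <= 1 -> `|a| <= 1 -> `|b| <= 1 ->
  0 <= block_det w a b.
Proof.
have one_sub_sqr_ge0 (c : R) : `|c| <= 1 -> 0 <= 1 - c ^+ 2.
  by move=> c_le1; rewrite subr_ge0 -real_normK ?num_real //; apply: exprn_ile1.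
move=> w_le /one_sub_sqr_ge0 a_ge0 /one_sub_sqr_ge0 b_ge0.
have W_ge0 := sqr_ge0 w.
by apply: divr_ge0 => //; do 3 apply: mulr_ge0 => //; lra.
Qed.

Lemma block_det_le_bound {w a b} : 4 * w ^+ 2 <= 1 ->
  block_det w a b <= det_bound w `|a * b|.
Proof.
move=> w_le; rewrite /block_det /det_bound ler_pM2r ?invr_gt0 // -[leLHS]mulrA.
apply: ler_wpM2l; last exact: one_sub_sqr_mul_le.
by apply: mulr_ge0; [exact: sqr_ge0 | lra].
Qed.

Lemma shannon_block_center {w} : 4 * w ^+ 2 <= 1 ->
  shannon (quad_roots (1 / 2) (block_det w 0 0) ++ quad_roots (1 / 2) (block_det w 0 0))
  = shannon [:: (1 - 2 * w ^+ 2) / 2; (1 - 2 * w ^+ 2) / 2; w ^+ 2; w ^+ 2].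
Proof.
move=> w_le; rewrite /quad_roots.
have -> : (1 / 2) ^+ 2 - 4 * block_det w 0 0 = (1 / 2 - 2 * w ^+ 2) ^+ 2.
  by rewrite /block_det; field.
rewrite sqrtr_sqr ger0_norm; last by lra.
rewrite (_ : (1 / 2 + _) / 2 = (1 - 2 * w ^+ 2) / 2); last by field.
rewrite (_ : (1 / 2 - _) / 2 = w ^+ 2); last by field.
by rewrite /shannon !big_cons big_nil; ring.
Qed.

End Discriminant.

Section Trigonometry.
Context {R : realType}.
Implicit Types s t : R.

Lemma cos2E t : cos (2 * t) = cos t ^+ 2 - sin t ^+ 2.
Proof. by rewrite mulr_natl mulr2n cosD !expr2. Qed.

Lemma one_sub_sqr_cos2 t : 1 - cos (2 * t) ^+ 2 = 4 * (cos t * sin t) ^+ 2.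
Proof.
by rewrite -[X in X - _](cos2Dsin2 (2 * t)) [in sin _]mulr_natl [in sin _]mulr2n sinD; ring.
Qed.

Lemma normr_cos_mul_le1 s t : `|cos s * cos t| <= 1.
Proof. by rewrite normrM mulr_ile1 ?normr_ge0 ?cos_max. Qed.

Lemma sin_pi4 : sin (pi / 4 : R) = cos (pi / 4).
Proof. by rewrite -cosBpihalf (_ : _ - _ = - (pi / 4)) ?cosN //; field. Qed.

Lemma cos_pi4_sqr : cos (pi / 4 : R) ^+ 2 = 1 / 2.
Proof. by have := cos2Dsin2 (pi / 4 : R); rewrite sin_pi4; lra. Qed.

Lemma cos2_pi4 : cos (2 * (pi / 4)) = 0 :> R.
Proof. by rewrite cos2E sin_pi4 subrr. Qed.

Lemma sin_cos_bounds t : 0 < t < pi / 2 ->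
  0 < sin t * cos t /\ 4 * (sin t * cos t) ^+ 2 <= 1.
Proof.
move=> /andP[t_gt0 t_lt]; have pi_gt0 := @pi_gt0 R.
split; first by rewrite mulr_gt0 ?sin_gt0_pi ?cos_gt0_pihalf //; apply/andP; split; lra.
by rewrite [sin t * _]mulrC -one_sub_sqr_cos2 lerBlDr lerDl sqr_ge0.
Qed.

End Trigonometry.

(* Keeps [/=] from computing [conjc 0] into [Complex 0 (- 0)]. *)
#[local] Arguments conjc : simpl never.

Section ReducedState.
Context {R : realType}.
Variables x y z : R.

Definition coefn (k : nat) : R[i] := coef_c x y z (inord k).
Arguments coefn : simpl never.

Lemma coef_cE (j : 'I_4) : coef_c x y z j = coefn j.
Proof. by rewrite /coefn inord_val. Qed.

(* In the basis |00>, |01>, |10>, |11> of AB,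
   U = [[Up, 0, 0, Uq], [0, Ur, Us, 0], [0, Us, Ur, 0], [Uq, 0, 0, Up]]. *)
Definition Up : R[i] := coefn 0 + coefn 3.
Definition Uq : R[i] := coefn 1 - coefn 2.
Definition Ur : R[i] := coefn 0 - coefn 3.
Definition Us : R[i] := coefn 1 + coefn 2.

Definition Umx (a b a0 b0 : nat) : R[i] :=
  match a, b, a0, b0 with
  | 0, 0, 0, 0 | 1, 1, 1, 1 => Up
  | 1, 1, 0, 0 | 0, 0, 1, 1 => Uq
  | 0, 1, 0, 1 | 1, 0, 1, 0 => Ur
  | 1, 0, 0, 1 | 0, 1, 1, 0 => Us
  | _, _, _, _ => 0
  end.

Lemma UelE (a b a0 b0 : 'I_2) : Uel x y z a b a0 b0 = Umx a b a0 b0.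
Proof.
have iN : Complex 0 (-1) = - 'i :> R[i] by simpc.
have ii : 'i * 'i = -1 :> R[i] by rewrite -expr2 sqr_i.
rewrite /Uel !big_ord_recr big_ord0 /= !mxE !coef_cE /=.
case: a => [[|[|//]] ?]; case: b => [[|[|//]] ?];
case: a0 => [[|[|//]] ?]; case: b0 => [[|[|//]] ?] => /=;
by rewrite /Up /Uq /Ur /Us ?iN -!mulrA ?mulrN ?mulNr ?opprK ?ii; ring.
Qed.

Variables al be : R.

Definition amp (t : R) (k : nat) : R := if k == 0%N then cos t else sin t.

Lemma chiE (a rA b rB : 'I_2) :
  chi x y z al be a rA b rB = Umx a b rA rB * (amp al rA * amp be rB)%:C.
Proof.
case: rA => [[|[|//]] ?]; case: rB => [[|[|//]] ?];
rewrite /chi !big_ord_recr !big_ord0 /= !UelE /phi2 /amp /=;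
by rewrite ?(mulr0, mul0r, addr0, add0r) -mulrA; congr (_ * _); simpc.
Qed.

Lemma rhoAE (i k : 'I_4) :
  rhoA x y z al be i k = \sum_(b < 2) \sum_(rB < 2)
    Umx (i %/ 2) b (i %% 2) rB * conjc (Umx (k %/ 2) b (k %% 2) rB)
    * (amp al (i %% 2) * amp al (k %% 2) * amp be rB ^+ 2)%:C.
Proof.
rewrite mxE; apply: eq_bigr => b _; apply: eq_bigr => rB _.
have hiE (j : 'I_4) : hi j = (j %/ 2)%N :> nat by rewrite inordK // ltn_divLR.
have loE (j : 'I_4) : lo j = (j %% 2)%N :> nat by rewrite inordK // ltn_mod.
have conjE (u : R[i]) (r : R) : conjc (u * r%:C) = conjc u * r%:C.
  by case: u => a c; rewrite /real_complex_def; simpc.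
rewrite !chiE !hiE !loE conjE !(rmorphM, rmorphXn) /=.
ring.
Qed.

Lemma rhoA_blockdiag03 : blockdiag03 (rhoA x y z al be).
Proof.
move=> i k; rewrite rhoAE /block03 !big_ord_recr !big_ord0 /=.
case: i => [[|[|[|[|//]]]] ?]; case: k => [[|[|[|[|//]]]] ?] //= _;
by rewrite ?(rmorph0, mul0r, mulr0, addr0).
Qed.

Local Notation rho i k := (rhoA x y z al be (inord i) (inord k)).
Local Notation nc u := (Normc.normc u ^+ 2).

Lemma rhoA_trace03 : rho 0 0 + rho 3 3 =
  ((cos al ^+ 2 * cos be ^+ 2 + sin al ^+ 2 * sin be ^+ 2) * nc Up
   + (cos al ^+ 2 * sin be ^+ 2 + sin al ^+ 2 * cos be ^+ 2) * nc Ur)%:C.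
Proof.
rewrite !rhoAE !inordK // !big_ord_recr !big_ord0 /= /amp /=.
rewrite !(rmorph0, mul0r, mulr0, addr0, add0r) !mulcJ /real_complex_def; simpc.
by congr Complex; ring.
Qed.

Lemma rhoA_trace12 : rho 1 1 + rho 2 2 =
  ((cos al ^+ 2 * cos be ^+ 2 + sin al ^+ 2 * sin be ^+ 2) * nc Uq
   + (cos al ^+ 2 * sin be ^+ 2 + sin al ^+ 2 * cos be ^+ 2) * nc Us)%:C.
Proof.
rewrite !rhoAE !inordK // !big_ord_recr !big_ord0 /= /amp /=.
rewrite !(rmorph0, mul0r, mulr0, addr0, add0r) !mulcJ /real_complex_def; simpc.
by congr Complex; ring.
Qed.

(* Each block determinant is (cos al sin al cos be sin be)^2 |p^2 - r^2|^2, where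
   p and r are the two entries of U on the corresponding parity sector, and
   p^2 - r^2 is 4 c0 c3 (resp. 4 c1 c2). *)
Lemma rhoA_det03 : rho 0 0 * rho 3 3 - rho 0 3 * rho 3 0 =
  (16 * (cos al * sin al * cos be * sin be) ^+ 2 * nc (coefn 0) * nc (coefn 3))%:C.
Proof.
have -> : rho 0 0 * rho 3 3 - rho 0 3 * rho 3 0 =
    ((cos al * sin al * cos be * sin be) ^+ 2)%:C * 16
    * ((coefn 0 * conjc (coefn 0)) * (coefn 3 * conjc (coefn 3))).
  rewrite !rhoAE !inordK // !big_ord_recr !big_ord0 /= /amp /= /Up /Ur.
  rewrite !(rmorph0, mul0r, mulr0, addr0, add0r) !(rmorphB, rmorphD, rmorphM, rmorphXn) /=.
  ring.
by rewrite !mulcJ !(rmorphM, rmorphXn, rmorph_nat); ring.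
Qed.

Lemma rhoA_det12 : rho 1 1 * rho 2 2 - rho 1 2 * rho 2 1 =
  (16 * (cos al * sin al * cos be * sin be) ^+ 2 * nc (coefn 1) * nc (coefn 2))%:C.
Proof.
have -> : rho 1 1 * rho 2 2 - rho 1 2 * rho 2 1 =
    ((cos al * sin al * cos be * sin be) ^+ 2)%:C * 16
    * ((coefn 1 * conjc (coefn 1)) * (coefn 2 * conjc (coefn 2))).
  rewrite !rhoAE !inordK // !big_ord_recr !big_ord0 /= /amp /= /Uq /Us.
  rewrite !(rmorph0, mul0r, mulr0, addr0, add0r) !(rmorphB, rmorphD, rmorphM, rmorphXn) /=.
  ring.
by rewrite !mulcJ !(rmorphM, rmorphXn, rmorph_nat); ring.
Qed.

End ReducedState.

Section QuarterPi.
Context {R : realType}.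
Variables x y : R.
Hypotheses (sx : sin x = cos x) (cx : cos x ^+ 2 = 1 / 2).
Local Notation w := (sin y * cos y).
Local Notation nc u := (Normc.normc u ^+ 2).

Let normc_pi4 (s t : R) : nc (Complex (cos x * s) (cos x * t)) = (s ^+ 2 + t ^+ 2) / 2.
Proof. by rewrite normc_complex !exprMn cx; field. Qed.

Lemma normc_coefn_pi4 :
  [/\ nc (coefn x y y 0) = (1 - 2 * w ^+ 2) / 2, nc (coefn x y y 1) = (1 - 2 * w ^+ 2) / 2,
      nc (coefn x y y 2) = w ^+ 2 & nc (coefn x y y 3) = w ^+ 2].
Proof.
rewrite /coefn /coef_c !inordK //= sx -!mulrA !normc_pi4.
have -> : (1 - 2 * w ^+ 2) / 2 = ((cos y ^+ 2 + sin y ^+ 2) ^+ 2 - 2 * w ^+ 2) / 2.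
  by rewrite cos2Dsin2 expr1n.
by split; field.
Qed.

Lemma normc_U_pi4 :
  [/\ nc (Up x y y) = (1 + 2 * w) / 2, nc (Ur x y y) = (1 - 2 * w) / 2,
      nc (Uq x y y) = (1 - 2 * w) / 2 & nc (Us x y y) = (1 + 2 * w) / 2].
Proof.
rewrite /Up /Ur /Uq /Us /coefn /coef_c !inordK //= sx; simpc.
rewrite -!mulrA -!mulrDr -!mulrBr !normc_pi4.
have CS := cos2Dsin2 y.
have -> : (1 + 2 * w) / 2
    = (cos y ^+ 2 + sin y ^+ 2) * (cos y ^+ 2 + sin y ^+ 2 + 2 * w) / 2.
  by rewrite CS mul1r.
have -> : (1 - 2 * w) / 2
    = (cos y ^+ 2 + sin y ^+ 2) * (cos y ^+ 2 + sin y ^+ 2 - 2 * w) / 2.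
  by rewrite CS mul1r.
by split; ring.
Qed.

Variables al be : R.
Local Notation rho i k := (rhoA x y y al be (inord i) (inord k)).
Local Notation a := (cos (2 * al)).
Local Notation b := (cos (2 * be)).

Let trace_pi4 (q : R) :
  (cos al ^+ 2 * cos be ^+ 2 + sin al ^+ 2 * sin be ^+ 2) * ((1 + 2 * q) / 2)
  + (cos al ^+ 2 * sin be ^+ 2 + sin al ^+ 2 * cos be ^+ 2) * ((1 - 2 * q) / 2)
  = 1 / 2 + q * (a * b).
Proof.
rewrite !cos2E [in RHS](_ : 1 / 2
    = (cos al ^+ 2 + sin al ^+ 2) * (cos be ^+ 2 + sin be ^+ 2) / 2).
  by field.
by rewrite !cos2Dsin2 mulr1.
Qed.

Lemma rhoA_trace03_pi4 : rho 0 0 + rho 3 3 = (1 / 2 + w * (a * b))%:C.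
Proof. by rewrite rhoA_trace03; have [-> -> _ _] := normc_U_pi4; rewrite trace_pi4. Qed.

Lemma rhoA_trace12_pi4 : rho 1 1 + rho 2 2 = (1 / 2 - w * (a * b))%:C.
Proof.
rewrite rhoA_trace12; have [_ _ -> ->] := normc_U_pi4.
by have := trace_pi4 (- w); rewrite mulrN opprK mulNr => <-.
Qed.

Lemma rhoA_det03_pi4 : rho 0 0 * rho 3 3 - rho 0 3 * rho 3 0 = (block_det w a b)%:C.
Proof.
rewrite rhoA_det03; have [-> _ _ ->] := normc_coefn_pi4.
by rewrite /block_det !one_sub_sqr_cos2; congr _%:C; field.
Qed.

Lemma rhoA_det12_pi4 : rho 1 1 * rho 2 2 - rho 1 2 * rho 2 1 = (block_det w a b)%:C.
Proof.
rewrite rhoA_det12; have [_ -> -> _] := normc_coefn_pi4.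
by rewrite /block_det !one_sub_sqr_cos2; congr _%:C; field.
Qed.

Hypotheses (w_gt0 : 0 < w) (w_le : 4 * w ^+ 2 <= 1).

Lemma Ent_pi4 : Ent x y y al be =
  shannon (quad_roots (1 / 2 + w * (a * b)) (block_det w a b)
           ++ quad_roots (1 / 2 - w * (a * b)) (block_det w a b)).
Proof.
have [disc03 disc12] := disc_ge0 w_gt0 w_le (normr_cos_mul_le1 (2 * al) (2 * be))
  (block_det_le_bound w_le).
rewrite /Ent; apply: vN_entropy_real_roots.
rewrite big_cat char_poly_blockdiag03; last exact: rhoA_blockdiag03.
congr (_ * _); apply: quad_roots_factor => //.
- exact: rhoA_trace03_pi4.
- exact: rhoA_det03_pi4.
- exact: rhoA_trace12_pi4.
- exact: rhoA_det12_pi4.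
Qed.

End QuarterPi.

Theorem proposition3 (R : realType) (x y z : R) :
  normalized x y z -> x = pi / 4 -> y = z ->
  (forall al be : R, 0 <= al <= pi / 4 -> 0 <= be <= pi / 2 ->
     Ent x y z al be <= Ent x y z (pi / 4) (pi / 4)) /\
  Ent x y z (pi / 4) (pi / 4) =
    shannon [:: Normc.normc (coef_c x y z 0) ^+ 2; Normc.normc (coef_c x y z 0) ^+ 2;
                Normc.normc (coef_c x y z 2) ^+ 2; Normc.normc (coef_c x y z 2) ^+ 2].
Proof.
move=> [_ [_ [_ [_ [y_gt0 y_lt]]]]] -> <-.
have [w_gt0 w_le] : 0 < sin y * cos y /\ 4 * (sin y * cos y) ^+ 2 <= 1.
  by apply: sin_cos_bounds; have := pi_gt0 R; rewrite y_gt0 /=; lra.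
have EntE := Ent_pi4 _ y sin_pi4 cos_pi4_sqr.
have Ent_center : Ent (pi / 4) y y (pi / 4) (pi / 4) =
    shannon [:: (1 - 2 * (sin y * cos y) ^+ 2) / 2; (1 - 2 * (sin y * cos y) ^+ 2) / 2;
                (sin y * cos y) ^+ 2; (sin y * cos y) ^+ 2].
  by rewrite EntE // cos2_pi4 !mulr0 addr0 subr0 shannon_block_center.
split=> [al be _ _ | ].
  rewrite Ent_center EntE //; apply: shannon_block_le => //.
  - exact: normr_cos_mul_le1.
  - exact: block_det_ge0 (cos_max _) (cos_max _).
  - exact: block_det_le_bound.
rewrite Ent_center !coef_cE.
by have [-> _ -> _] := normc_coefn_pi4 _ y sin_pi4 cos_pi4_sqr.
Qed.
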